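(* Let $P$ be a product rule. The $P$-product is bilinear, associative and commutative if and only if $P$ is simple, i.e. there exist $\alpha,\beta,\gamma\in\mathbb Q$ with $\alpha\gamma=\beta(\beta-1)$ such that \[P(x,\dot x,y,\dot y)\approx \alpha\cdot xy+\beta\cdot(x\dot y+\dot x y)+\gamma\cdot\dot x\dot y.\]
   Context: Let $\Sigma$ be a finite alphabet, $\Sigma^*$ the set of finite words with empty word $\varepsilon$. A series is a function $f:\Sigma^*\to\mathbb Q$; write $f_w=f(w)$; the set of series $\mathbb Q\langle\langle\Sigma\rangle\rangle$ is a $\mathbb Q$-vector space under pointwise operations, with zero series $\mathbb 0$. For $a\in\Sigma$ the left derivative $\delta_a f$ is the series $w\mapsto f(aw)$. Terms: for a set $X$ of variables, $\mathrm{Terms}(X)$ is the set of syntactic terms generated by $u,v::=x\mid 0\mid c\cdot u\mid u+v\mid u*v$ ($x\in X$, $c\in\mathbb Q$); we write $uv$ for $u*v$. A product rule is a term $P\in\mathrm{Terms}(\{x,\dot x,y,\dot y\})$; $P(s_1,s_2,s_3,s_4)$ denotes substitution for $x,\dot x,y,\dot y$. $P$-product: the $P$-product $*$ on series and the semantics $[\![u]\!]_\varrho$ of terms under valuations $\varrho:X\to\mathbb Q\langle\langle\Sigma\rangle\rangle$ are the unique pair with $(f*g)_\varepsilon=f_\varepsilon g_\varepsilon$, $\delta_a(f*g)=[\![P]\!]_{[x\mapsto f,\dot x\mapsto\delta_af,y\mapsto g,\dot y\mapsto\delta_ag]}$ for all $a\in\Sigma$, and $[\![0]\!]_\varrho=\mathbb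 0$, $[\![x]\!]_\varrho=\varrho(x)$, $[\![c\cdot u]\!]_\varrho=c[\![u]\!]_\varrho$, $[\![u+v]\!]_\varrho=[\![u]\!]_\varrho+[\![v]\!]_\varrho$, $[\![u*v]\!]_\varrho=[\![u]\!]_\varrho*[\![v]\!]_\varrho$. BAC means: for all series $f,g,h$ and $c\in\mathbb Q$, $(f+g)*h=f*h+g*h$, $(c f)*g=c(f*g)$, $f*(g*h)=(f*g)*h$, $f*g=g*f$. Term equivalence: $u\approx v$ iff $u,v$ denote the same polynomial in the commutative polynomial ring $\mathbb Q[X]$ when the term constructors are read as polynomial operations. *)

From HB Require Import structures.
From mathcomp Require Import all_boot all_order all_algebra.
From mathcomp Require Import mpoly.
Set Implicit Arguments. Unset Strict Implicit. Unset Printing Implicit Defensive.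
Import Order.TTheory GRing.Theory Num.Theory.
Local Open Scope ring_scope.

Definition series (Sigma : finType) := seq Sigma -> rat.

Section Series.
Variable Sigma : finType.
Definition szero : series Sigma := fun _ => 0.
Definition sadd (f g : series Sigma) : series Sigma := fun w => f w + g w.
Definition sscale (c : rat) (f : series Sigma) : series Sigma := fun w => c * f w.
Definition sderiv (a : Sigma) (f : series Sigma) : series Sigma := fun w => f (a :: w).
Definition seq_eq (f g : series Sigma) : Prop := forall w, f w = g w.
End Series.

Inductive term (X : Type) : Type :=
| TVar of X
| TZero
| TScale of rat & term X
| TAdd of term X & term X
| TMul of term X & term X.
Arguments TZero {X}.

Fixpoint sem (Sigma : finType) (X : Type)
    (mul : series Sigma -> series Sigma -> series Sigma)
    (rho : X -> series Sigma) (u : term X) : series Sigma :=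
  match u with
  | TVar x => rho x
  | TZero => @szero Sigma
  | TScale c u => sscale c (sem mul rho u)
  | TAdd u v => sadd (sem mul rho u) (sem mul rho v)
  | TMul u v => mul (sem mul rho u) (sem mul rho v)
  end.

Inductive pvar := PX | PXd | PY | PYd.
Definition product_rule := term pvar.

Definition prule_env (Sigma : finType) (f g : series Sigma) (a : Sigma)
  : pvar -> series Sigma :=
  fun v => match v with
           | PX => f | PXd => sderiv a f | PY => g | PYd => sderiv a g end.

(* The P-product.  [pprod_approx P n] computes the P-product correctly on all
   words of length <= n, by recursion on n, following the defining equations
     (f*g)_eps = f_eps g_eps,
     delta_a (f*g) = [[P]]_[x:=f, xdot:=delta_a f, y:=g, ydot:=delta_a g]
   (a coefficient of a word of length m+1 only needs products on words of
   length m). *)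
Fixpoint pprod_approx (Sigma : finType) (P : product_rule) (n : nat)
    : series Sigma -> series Sigma -> series Sigma :=
  fun f g w =>
    match n with
    | 0 => f [::] * g [::]
    | n'.+1 =>
        match w with
        | [::] => f [::] * g [::]
        | a :: w' => sem (pprod_approx P n') (prule_env f g a) P w'
        end
    end.

Definition pprod (Sigma : finType) (P : product_rule) (f g : series Sigma)
  : series Sigma := fun w => pprod_approx P (size w) f g w.

Definition BAC (Sigma : finType) (P : product_rule) : Prop :=
  let mul := pprod P in
  (forall f g h : series Sigma, seq_eq (mul (sadd f g) h) (sadd (mul f h) (mul g h))) /\
  (forall (c : rat) (f g : series Sigma), seq_eq (mul (sscale c f) g) (sscale c (mul f g))) /\
  (forall f g h : series Sigma, seq_eq (mul f (mul g h)) (mul (mul f g) h)) /\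
  (forall f g : series Sigma, seq_eq (mul f g) (mul g f)).

Fixpoint term_poly (X : Type) (n : nat) (ix : X -> 'I_n) (u : term X)
  : {mpoly rat[n]} :=
  match u with
  | TVar x => 'X_(ix x)
  | TZero => 0
  | TScale c u => c *: term_poly ix u
  | TAdd u v => term_poly ix u + term_poly ix v
  | TMul u v => term_poly ix u * term_poly ix v
  end.

Definition pvar_idx (v : pvar) : 'I_4 :=
  match v with
  | PX => @Ordinal 4 0 isT | PXd => @Ordinal 4 1 isT
  | PY => @Ordinal 4 2 isT | PYd => @Ordinal 4 3 isT end.

Definition teq (u v : product_rule) : Prop :=
  term_poly pvar_idx u = term_poly pvar_idx v.

Definition simple_rule (a b c : rat) : product_rule :=
  TAdd (TAdd (TScale a (TMul (TVar PX) (TVar PY)))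
             (TScale b (TAdd (TMul (TVar PX) (TVar PYd)) (TMul (TVar PXd) (TVar PY)))))
       (TScale c (TMul (TVar PXd) (TVar PYd))).

Definition simple (P : product_rule) : Prop :=
  exists a b c : rat, a * c = b * (b - 1) /\ teq P (simple_rule a b c).

(* If P ~ a xy + b (x y' + x' y) + c x' y', the recursion reads
   d_a(f*g) = a f*g + b (f*d_a g + d_a f*g) + c d_a f*d_a g.  Assume the BAC
   laws hold on words of length <= n.  Since the coefficient of f*g on a word
   only depends on f and g on shorter words, the product cut off beyond length
   n is a genuine bilinear, associative and commutative operation, so P may be
   replaced by the simple rule there; expanding both sides then proves the laws
   on words of length n+1, associativity requiring exactly ac = b(b-1).
   Conversely, on words of length <= 1 the P-product is the polynomial P
   evaluated at (f_e, f_a, g_e, g_a): BAC makes it a symmetric bilinear form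
   a x0 y0 + b (x0 y1 + x1 y0) + c x1 y1, associativity at (1,0), (1,0), (0,1)
   gives b^2 = b + ac, and a polynomial over Q vanishing everywhere is zero. *)

From HB Require Import structures.
From mathcomp Require Import all_boot all_order all_algebra mpoly.
From mathcomp Require Import boolp ring.
Set Implicit Arguments. Unset Strict Implicit. Unset Printing Implicit Defensive.
Import GRing.Theory Num.Theory.
Local Open Scope ring_scope.

Definition pvar_of_idx (i : 'I_4) : pvar :=
  match val i with 0 => PX | 1 => PXd | 2 => PY | _ => PYd end.

Lemma pvar_idxK : cancel pvar_idx pvar_of_idx. Proof. by case. Qed.

Section Unitization.
Variable Sigma : finType.
Local Notation S := (series Sigma).
Variable mul : S -> S -> S.
Hypothesis mulDl : forall f g h, mul (sadd f g) h = sadd (mul f h) (mul g h).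
Hypothesis mulZl : forall c f g, mul (sscale c f) g = sscale c (mul f g).
Hypothesis mulA : forall f g h, mul f (mul g h) = mul (mul f g) h.
Hypothesis mulC : forall f g, mul f g = mul g f.

Lemma smulDr f g h : mul h (sadd f g) = sadd (mul h f) (mul h g).
Proof. by rewrite mulC mulDl (mulC f) (mulC g). Qed.

Lemma smulZr c f g : mul g (sscale c f) = sscale c (mul g f).
Proof. by rewrite mulC mulZl mulC. Qed.

Lemma smul0l f : mul (@szero Sigma) f = @szero Sigma.
Proof.
have -> : @szero Sigma = sscale 0 (@szero Sigma).
  by apply: funext => w; rewrite /sscale mul0r.
by rewrite mulZl; apply: funext => w; rewrite /sscale mul0r.
Qed.

(* [mul] has no unit, so terms are read in the unitization [Q x S], where
   polynomials can be evaluated. *)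
Definition unitz := (rat * S)%type.
HB.instance Definition _ := gen_eqMixin unitz.
HB.instance Definition _ := gen_choiceMixin unitz.

Definition unitz_add (x y : unitz) : unitz := (x.1 + y.1, sadd x.2 y.2).
Definition unitz_opp (x : unitz) : unitz := (- x.1, sscale (-1) x.2).
Definition unitz_mul (x y : unitz) : unitz :=
  (x.1 * y.1, sadd (sadd (sscale x.1 y.2) (sscale y.1 x.2)) (mul x.2 y.2)).
Definition unitz_const (c : rat) : unitz := (c, @szero Sigma).

Local Ltac unitz_ring :=
  rewrite /unitz_add /unitz_opp /unitz_const /=;
  congr (_, _); try ring;
  apply: funext => w; rewrite /sadd /sscale /szero /=; ring.

Lemma unitz_addA : associative unitz_add.
Proof. by move=> [a x] [b y] [c z]; unitz_ring. Qed.
Lemma unitz_addC : commutative unitz_add.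
Proof. by move=> [a x] [b y]; unitz_ring. Qed.
Lemma unitz_add0 : left_id (unitz_const 0) unitz_add.
Proof. by move=> [a x]; unitz_ring. Qed.
Lemma unitz_addN : left_inverse (unitz_const 0) unitz_opp unitz_add.
Proof. by move=> [a x]; unitz_ring. Qed.

HB.instance Definition _ :=
  GRing.isZmodule.Build unitz unitz_addA unitz_addC unitz_add0 unitz_addN.

Lemma unitz_mulA : associative unitz_mul.
Proof.
move=> [a x] [b y] [c z]; rewrite /unitz_mul /=.
by rewrite !mulDl !smulDr !mulZl !smulZr mulA; unitz_ring.
Qed.
Lemma unitz_mulC : commutative unitz_mul.
Proof. by move=> [a x] [b y]; rewrite /unitz_mul /= mulC; unitz_ring. Qed.
Lemma unitz_mul1 : left_id (unitz_const 1) unitz_mul.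
Proof. by move=> [a x]; rewrite /unitz_mul /= smul0l; unitz_ring. Qed.
Lemma unitz_mulDl : left_distributive unitz_mul unitz_add.
Proof. by move=> [a x] [b y] [c z]; rewrite /unitz_mul /= mulDl; unitz_ring. Qed.
Lemma unitz1_neq0 : unitz_const 1 != unitz_const 0.
Proof. by apply/eqP => -[]. Qed.

HB.instance Definition _ := GRing.Zmodule_isComNzRing.Build unitz
  unitz_mulA unitz_mulC unitz_mul1 unitz_mulDl unitz1_neq0.

Lemma unitz_const_nmod : GRing.nmod_morphism unitz_const.
Proof. by split=> // a b; unitz_ring. Qed.
Lemma unitz_const_monoid : GRing.monoid_morphism unitz_const.
Proof. by split=> // a b; rewrite /GRing.mul /= /unitz_mul /= smul0l; unitz_ring. Qed.
HB.instance Definition _ :=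
  GRing.isNmodMorphism.Build rat unitz unitz_const unitz_const_nmod.
HB.instance Definition _ :=
  GRing.isMonoidMorphism.Build rat unitz unitz_const unitz_const_monoid.

Lemma mmap_term_poly (X : Type) (k : nat) (ix : X -> 'I_k) (rho : X -> S)
    (h : 'I_k -> unitz) (hrho : forall x, h (ix x) = (0, rho x)) (u : term X) :
  mmap unitz_const h (term_poly ix u) = (0, sem mul rho u).
Proof.
elim: u => [x||c u IH|u IHu v IHv|u IHu v IHv] /=.
- by rewrite mmapX mmap1U hrho.
- by rewrite mmap0.
- rewrite mmapZ IH /GRing.mul /= /unitz_mul /= smul0l; unitz_ring.
- by rewrite (mmapD h unitz_const) IHu IHv.
- by rewrite rmorphM /= IHu IHv /GRing.mul /= /unitz_mul /=; unitz_ring.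
Qed.

Lemma sem_teq (rho : pvar -> S) (u v : product_rule) :
  teq u v -> sem mul rho u = sem mul rho v.
Proof.
pose h i : unitz := (0, rho (pvar_of_idx i)).
have hrho x : h (pvar_idx x) = (0, rho x) by rewrite /h pvar_idxK.
by move=> uv; have := mmap_term_poly hrho u; rewrite uv (mmap_term_poly hrho) => -[].
Qed.

End Unitization.

Section Causality.
Variable Sigma : finType.
Local Notation S := (series Sigma).
Variable P : product_rule.
Local Notation pp := (pprod P).

Definition agree_upto (k : nat) (f g : S) :=
  forall v : seq Sigma, (size v <= k)%N -> f v = g v.

Definition causal_upto (k : nat) (mul : S -> S -> S) :=
  forall f f' g g' w, (size w <= k)%N ->
    agree_upto (size w) f f' -> agree_upto (size w) g g' -> mul f g w = mul f' g' w.

Lemma agree_upto_refl k f : agree_upto k f f.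
Proof. by []. Qed.

Lemma agree_upto_le k k' f g :
  (k' <= k)%N -> agree_upto k f g -> agree_upto k' f g.
Proof. by move=> le_k'k fg v hv; apply: fg; apply: leq_trans le_k'k. Qed.

Lemma sem_agree_upto (mul1 mul2 : S -> S -> S) k :
    causal_upto k mul1 ->
    (forall f g v, (size v <= k)%N -> mul1 f g v = mul2 f g v) ->
  forall (X : Type) (rho rho' : X -> S),
    (forall x, agree_upto k (rho x) (rho' x)) ->
  forall u, agree_upto k (sem mul1 rho u) (sem mul2 rho' u).
Proof.
move=> causal1 mul12 X rho rho' rho_rho'.
elim=> [x||c u IH|u IHu v IHv|u IHu v IHv] /= w hw.
- exact: rho_rho'.
- by [].
- by rewrite /sscale IH.
- by rewrite /sadd IHu ?IHv.
- by rewrite -mul12 //; apply: causal1; [|apply: agree_upto_le IHu|apply: agree_upto_le IHv].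
Qed.

Lemma agree_upto_prule_env k f f' g g' a :
    agree_upto k.+1 f f' -> agree_upto k.+1 g g' ->
  forall x, agree_upto k (prule_env f g a x) (prule_env f' g' a x).
Proof.
move=> ff' gg' [] v hv /=; rewrite /sderiv.
- by apply: ff'; apply: leqW.
- exact: ff'.
- by apply: gg'; apply: leqW.
- exact: gg'.
Qed.

Lemma pprod_approx_causal m : causal_upto m (pprod_approx P m).
Proof.
elim: m => [|m IH] f f' g g' [|a w] //= hw ff' gg'; try by rewrite ff' ?gg'.
apply: (@sem_agree_upto _ _ (size w)) => //.
- by move=> f1 f1' g1 g1' v hv; apply: IH; apply: leq_trans hv hw.
- exact: agree_upto_prule_env.
Qed.

Lemma pprod_approx_stable k m1 m2 (f g : S) w :
    (size w <= k)%N -> (size w <= m1)%N -> (size w <= m2)%N ->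
  pprod_approx P m1 f g w = pprod_approx P m2 f g w.
Proof.
elim: k m1 m2 f g w => [|k IH] [|m1] [|m2] f g [|a w] //= hk h1 h2.
apply: (@sem_agree_upto _ _ (size w)) => //.
- by move=> f1 f1' g1 g1' v hv; apply: pprod_approx_causal; apply: leq_trans hv h1.
- by move=> f1 g1 v hv; apply: IH; apply: leq_trans hv _.
Qed.

Lemma pprod_approxE m (f g : S) w :
  (size w <= m)%N -> pprod_approx P m f g w = pp f g w.
Proof. by move=> hw; apply: (@pprod_approx_stable m). Qed.

Lemma pprod_causal (f f' g g' : S) w :
  agree_upto (size w) f f' -> agree_upto (size w) g g' -> pp f g w = pp f' g' w.
Proof. exact: pprod_approx_causal. Qed.

Lemma pprod_cons (f g : S) a w : pp f g (a :: w) = sem pp (prule_env f g a) P w.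
Proof.
apply: (@sem_agree_upto _ _ (size w)) => //.
- by move=> f1 f1' g1 g1' v hv; apply: pprod_approx_causal.
- by move=> f1 g1 v hv; apply: pprod_approxE.
Qed.

End Causality.

Section SimpleRule.
Variable Sigma : finType.
Local Notation S := (series Sigma).
Variables (P : product_rule) (a b c : rat).
Hypothesis abc_rel : a * c = b * (b - 1).
Hypothesis P_simple : teq P (simple_rule a b c).
Local Notation pp := (pprod P).

Definition BAC_upto (n : nat) := forall w : seq Sigma, (size w <= n)%N ->
  [/\ forall f g h : S, pp (sadd f g) h w = pp f h w + pp g h w,
      forall (d : rat) (f g : S), pp (sscale d f) g w = d * pp f g w,
      forall f g h : S, pp f (pp g h) w = pp (pp f g) h w &
      forall f g : S, pp f g w = pp g f w].

Section Truncation.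
Variable n : nat.
Hypothesis BACn : BAC_upto n.

(* Cutting the product off beyond length [n] turns the laws on short words
   into identities of series, so that [sem_teq] applies. *)
Definition pprod_trunc (f g : S) : S :=
  fun v => if (size v <= n)%N then pp f g v else 0.

Lemma pprod_truncDl f g h :
  pprod_trunc (sadd f g) h = sadd (pprod_trunc f h) (pprod_trunc g h).
Proof.
apply: funext => v; rewrite /pprod_trunc /sadd.
by case: ifP => hv; [case: (BACn hv) => -> | rewrite addr0].
Qed.

Lemma pprod_truncZl d f g :
  pprod_trunc (sscale d f) g = sscale d (pprod_trunc f g).
Proof.
apply: funext => v; rewrite /pprod_trunc /sscale.
by case: ifP => hv; [case: (BACn hv) => _ -> | rewrite mulr0].
Qed.

Lemma pprod_truncC f g : pprod_trunc f g = pprod_trunc g f.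
Proof.
by apply: funext => v; rewrite /pprod_trunc; case: ifP => hv; [case: (BACn hv) => _ _ _ ->|].
Qed.

Lemma pprod_truncE f g (v : seq Sigma) :
  (size v <= n)%N -> pprod_trunc f g v = pp f g v.
Proof. by rewrite /pprod_trunc => ->. Qed.

Lemma agree_pprod_trunc f g (v : seq Sigma) :
  (size v <= n)%N -> agree_upto (size v) (pprod_trunc f g) (pp f g).
Proof. by move=> hv u hu; rewrite pprod_truncE ?(leq_trans hu hv). Qed.

Lemma pprod_truncA f g h :
  pprod_trunc f (pprod_trunc g h) = pprod_trunc (pprod_trunc f g) h.
Proof.
apply: funext => v; have [hv|hv] := leqP (size v) n; last first.
  by rewrite /pprod_trunc leqNgt hv.
rewrite !pprod_truncE // (pprod_causal P (agree_upto_refl f) (agree_pprod_trunc g h hv)).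
rewrite (pprod_causal P (agree_pprod_trunc f g hv) (agree_upto_refl h)).
by case: (BACn hv) => _ _ ->.
Qed.

Lemma pprod_cons_simple (f g : S) x :
  agree_upto n (sderiv x (pp f g)) (sem pp (prule_env f g x) (simple_rule a b c)).
Proof.
move=> w hw; rewrite /sderiv pprod_cons.
have -> : sem pp (prule_env f g x) P w = sem pprod_trunc (prule_env f g x) P w.
  apply: (@sem_agree_upto _ _ _ n) => //.
  - by move=> f1 f1' g1 g1' v hv; apply: pprod_causal.
  - by move=> f1 g1 v hv; rewrite pprod_truncE.
rewrite (sem_teq pprod_truncDl pprod_truncZl pprod_truncA pprod_truncC _ P_simple).
by rewrite /= /sadd /sscale /pprod_trunc /= hw.
Qed.

End Truncation.

Lemma BAC_upto0 : BAC_upto 0.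
Proof. by case=> // _; split=> *; rewrite /pprod /= /sadd /sscale; ring. Qed.

Lemma BAC_uptoS n : BAC_upto n -> BAC_upto n.+1.
Proof.
move=> BACn [|x w] hw; first exact: BACn.
have {}hw : (size w <= n)%N by [].
have [ppDl ppZl ppA ppC] := BACn w hw.
have ppDr f g h : pp h (sadd f g) w = pp h f w + pp h g w.
  by rewrite ppC ppDl !(ppC h).
have ppZr d f g : pp g (sscale d f) w = d * pp g f w.
  by rewrite ppC ppZl ppC.
have ppS f g : pp f g (x :: w) = a * pp f g w
    + b * (pp f (sderiv x g) w + pp (sderiv x f) g w)
    + c * pp (sderiv x f) (sderiv x g) w.
  exact: (pprod_cons_simple BACn f g x hw).
split.
- move=> f g h; rewrite !ppS.
  have -> : sderiv x (sadd f g) = sadd (sderiv x f) (sderiv x g) by [].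
  rewrite !ppDl; ring.
- move=> d f g; rewrite !ppS.
  have -> : sderiv x (sscale d f) = sscale d (sderiv x f) by [].
  rewrite !ppZl; ring.
- move=> f g h; rewrite !ppS.
  have dgh := agree_upto_le hw (pprod_cons_simple BACn g h x).
  have dfg := agree_upto_le hw (pprod_cons_simple BACn f g x).
  rewrite (pprod_causal P (agree_upto_refl f) dgh).
  rewrite (pprod_causal P (agree_upto_refl (sderiv x f)) dgh).
  rewrite (pprod_causal P dfg (agree_upto_refl h)).
  rewrite (pprod_causal P dfg (agree_upto_refl (sderiv x h))).
  rewrite /= !(ppDl, ppDr, ppZl, ppZr) !ppA.
  ring: abc_rel.
- move=> f g; rewrite !ppS (ppC f g) (ppC f (sderiv x g)) (ppC (sderiv x f) g).
  by rewrite (ppC (sderiv x f)); ring.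
Qed.

Lemma BAC_of_simple : BAC Sigma P.
Proof.
have BACn n : BAC_upto n by elim: n => [|n]; [exact: BAC_upto0 | exact: BAC_uptoS].
by split; [|split; [|split]] => * w; case: (BACn (size w) w (leqnn _)).
Qed.

End SimpleRule.

Section PolynomialIdentity.
Variable R : numDomainType.

Lemma poly_eq0_of_horner (r : {poly R}) : (forall x, r.[x] = 0) -> r = 0.
Proof.
move=> r0; apply: (@roots_geq_poly_eq0 _ _ [seq i%:R | i <- iota 0 (size r)]).
- by apply/allP => x _; apply/rootP.
- by rewrite map_inj_uniq ?iota_uniq // => i j /eqP; rewrite eqr_nat => /eqP.
- by rewrite size_map size_iota.
Qed.

Lemma mpoly0_eq0_of_meval (p : {mpoly R[0]}) : (forall v, p.@[v] = 0) -> p = 0.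
Proof.
have m0 (m : 'X_{1..0}) : m = 0%MM by apply/mnmP => -[].
move=> p0; apply/mpolyP => m; rewrite mcoeff0 (m0 m).
have := p0 (fun _ => 0); rewrite mevalE.
under eq_bigr => m' _ do rewrite big_ord0 mulr1.
have [p_0|] := boolP (0%MM \in msupp p); last by move=> /memN_msupp_eq0.
rewrite (bigD1_seq 0%MM) ?msupp_uniq //= big1 ?addr0 // => m'.
by rewrite (m0 m') eqxx.
Qed.

Section LastVariable.
Variable n : nat.

Definition vext (v : 'I_n -> R) (x : R) (i : 'I_n.+1) : R :=
  if insub (val i) is Some j then v j else x.

Lemma vext_widen v x (i : 'I_n) : vext v x (widen_ord (leqnSn n) i) = v i.
Proof.
rewrite /vext; case: insubP => [j _ hj|]; last by rewrite /= ltn_ord.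
by congr v; apply: val_inj.
Qed.

Lemma vext_max v x : vext v x ord_max = x.
Proof. by rewrite /vext; case: insubP => [j _ /= hj|] //; have := ltn_ord j; rewrite hj ltnn. Qed.

Lemma meval_vext (p : {mpoly R[n.+1]}) v x :
  p.@[vext v x] = (map_poly (meval v) (muni p)).[x].
Proof.
rewrite muniE mevalE raddf_sum horner_sum; apply: eq_bigr => m _.
set c := (p@_m *: _).
rewrite [X in X.[x]](_ : _ = (meval v c) *: 'X^(m ord_max)); last first.
  apply/polyP => i; rewrite coef_map coefZ coefXn coefZ coefXn.
  by case: eqP => _; rewrite ?mulr1 ?mulr0 //; exact: raddf0.
rewrite hornerZ hornerXn /c mevalZ mevalX big_ord_recr /= vext_max mulrA.
by congr (_ * _ * _); apply: eq_bigr => i _; rewrite vext_widen mnmE.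
Qed.

Definition mnm_init (m : 'X_{1..n.+1}) : 'X_{1..n} :=
  [multinom m (widen_ord (leqnSn n) i) | i < n].

Lemma mnm_init_inj m1 m2 :
  mnm_init m1 = mnm_init m2 -> m1 ord_max = m2 ord_max -> m1 = m2.
Proof.
move=> e12 max12; apply/mnmP => i; have [j ->|->] := unliftP ord_max i => //.
have := congr1 (fun m : 'X_{1..n} => m j) e12; rewrite /mnm_init !mnmE.
suff -> : lift ord_max j = widen_ord (leqnSn n) j by [].
by apply: val_inj; rewrite /= /bump leqNgt ltn_ord.
Qed.

Lemma mcoeff_muni (p : {mpoly R[n.+1]}) m :
  ((muni p)`_(m ord_max))@_(mnm_init m) = p@_m.
Proof.
rewrite muniE coef_sum raddf_sum /=.
rewrite (eq_bigr (fun m' => if m' == m then p@_m' else 0)); last first.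
  move=> m' _; rewrite coefZ coefXn.
  have [-> | ne] := eqVneq m' m; first by rewrite eqxx mulr1 mcoeffZ mcoeffX eqxx mulr1.
  case: eqP => e_max; last by rewrite mulr0; apply: raddf0.
  rewrite mulr1 mcoeffZ mcoeffX; case: eqP => [e_init|]; last by rewrite mulr0.
  by case/eqP: ne; apply: mnm_init_inj.
have [p_m|p_m] := boolP (m \in msupp p).
- rewrite (bigD1_seq m) ?msupp_uniq //= eqxx big1 ?addr0 // => i.
  by move=> /negbTE ->.
- rewrite big1_seq ?memN_msupp_eq0 // => i hi.
  by case: eqP => // e; move: p_m hi; rewrite -e => /negbTE ->.
Qed.

End LastVariable.

Lemma mpoly_eq0_of_meval n (p : {mpoly R[n]}) : (forall v, p.@[v] = 0) -> p = 0.
Proof.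
elim: n p => [|n IH] p p0; first exact: mpoly0_eq0_of_meval.
have muni_p0 k : (muni p)`_k = 0.
  apply: IH => v.
  have : map_poly (meval v) (muni p) = 0.
    by apply: poly_eq0_of_horner => x; rewrite -meval_vext.
  by move/(congr1 (fun q : {poly R} => q`_k)); rewrite coef_map coef0.
by apply/mpolyP => m; rewrite mcoeff0 -mcoeff_muni muni_p0 mcoeff0.
Qed.

End PolynomialIdentity.

Lemma symmetric_bilinear_formE (R : comNzRingType) (E : R -> R -> R -> R -> R) :
    (forall x0 x1 y0 y1 z0 z1,
       E (x0 + y0) (x1 + y1) z0 z1 = E x0 x1 z0 z1 + E y0 y1 z0 z1) ->
    (forall d x0 x1 y0 y1, E (d * x0) (d * x1) y0 y1 = d * E x0 x1 y0 y1) ->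
    (forall x0 x1 y0 y1, E x0 x1 y0 y1 = E y0 y1 x0 x1) ->
  forall x0 x1 y0 y1, E x0 x1 y0 y1 =
    E 1 0 1 0 * x0 * y0 + E 1 0 0 1 * (x0 * y1 + x1 * y0) + E 0 1 0 1 * x1 * y1.
Proof.
move=> ED EZ EC.
have E_lin x0 x1 y0 y1 : E x0 x1 y0 y1 = x0 * E 1 0 y0 y1 + x1 * E 0 1 y0 y1.
  have := ED x0 0 0 x1 y0 y1; rewrite addr0 add0r => ->.
  have := EZ x0 1 0 y0 y1; rewrite mulr1 mulr0 => ->.
  by have := EZ x1 0 1 y0 y1; rewrite mulr1 mulr0 => ->.
move=> x0 x1 y0 y1; rewrite E_lin (EC 1 0) (EC 0 1) (E_lin y0) (E_lin y0 y1 0 1).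
by rewrite (EC 0 1 1 0); ring.
Qed.

Lemma sem_nil_meval (Sigma : finType) (mul : series Sigma -> series Sigma -> series Sigma)
    (mul_nil : forall f g, mul f g [::] = f [::] * g [::])
    (X : Type) (k : nat) (ix : X -> 'I_k) (rho : X -> series Sigma) (v : 'I_k -> rat)
    (hv : forall x, v (ix x) = rho x [::]) (u : term X) :
  sem mul rho u [::] = (term_poly ix u).@[v].
Proof.
elim: u => [x||c u IH|u IHu u' IHu'|u IHu u' IHu'] /=.
- by rewrite mevalXU hv.
- by rewrite meval0.
- by rewrite mevalZ -IH.
- by rewrite mevalD -IHu -IHu'.
- by rewrite mul_nil mevalM -IHu -IHu'.
Qed.

Definition pvar_val (x0 x1 y0 y1 : rat) (x : pvar) : rat :=
  match x with PX => x0 | PXd => x1 | PY => y0 | PYd => y1 end.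

Definition rule_eval (P : product_rule) (x0 x1 y0 y1 : rat) : rat :=
  (term_poly pvar_idx P).@[pvar_val x0 x1 y0 y1 \o pvar_of_idx].

Lemma term_poly_mevalE (P : product_rule) (v : 'I_4 -> rat) :
  (term_poly pvar_idx P).@[v] =
    rule_eval P (v (pvar_idx PX)) (v (pvar_idx PXd)) (v (pvar_idx PY)) (v (pvar_idx PYd)).
Proof. by apply: meval_eq => -[[|[|[|[|i]]]] hi] //=; congr v; apply: val_inj. Qed.

Definition series_of_pair (Sigma : finType) (x0 x1 : rat) : series Sigma :=
  fun w => if w is [::] then x0 else x1.

Lemma pprod_single (Sigma : finType) (P : product_rule) (f g : series Sigma) a :
  pprod P f g [:: a] = rule_eval P (f [::]) (f [:: a]) (g [::]) (g [:: a]).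
Proof. by apply: sem_nil_meval => // -[]. Qed.

Lemma simple_of_BAC (Sigma : finType) (a : Sigma) (P : product_rule) :
  BAC Sigma P -> simple P.
Proof.
move=> [BD [BZ [BA BC]]]; pose s := @series_of_pair Sigma.
pose E := rule_eval P.
have ED x0 x1 y0 y1 z0 z1 : E (x0 + y0) (x1 + y1) z0 z1 = E x0 x1 z0 z1 + E y0 y1 z0 z1.
  by have := BD (s x0 x1) (s y0 y1) (s z0 z1) [:: a]; rewrite /sadd !pprod_single.
have EZ d x0 x1 y0 y1 : E (d * x0) (d * x1) y0 y1 = d * E x0 x1 y0 y1.
  by have := BZ d (s x0 x1) (s y0 y1) [:: a]; rewrite /sscale !pprod_single.
have EC x0 x1 y0 y1 : E x0 x1 y0 y1 = E y0 y1 x0 x1.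
  by have := BC (s x0 x1) (s y0 y1) [:: a]; rewrite !pprod_single.
have EA x0 x1 y0 y1 z0 z1 :
    E x0 x1 (y0 * z0) (E y0 y1 z0 z1) = E (x0 * y0) (E x0 x1 y0 y1) z0 z1.
  by have := BA (s x0 x1) (s y0 y1) (s z0 z1) [:: a]; rewrite !pprod_single.
(* The coefficients are abstracted so that rewriting with [EE] terminates. *)
have [al [be [ga EE]]] : exists al be ga, forall x0 x1 y0 y1,
    E x0 x1 y0 y1 = al * x0 * y0 + be * (x0 * y1 + x1 * y0) + ga * x1 * y1.
  by do 3 eexists; apply: symmetric_bilinear_formE.
exists al, be, ga; split.
  by have := EA 1 0 1 0 0 1; rewrite !EE => e; ring: e.
apply/eqP; rewrite -subr_eq0; apply/eqP; apply: mpoly_eq0_of_meval => v.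
rewrite mevalB term_poly_mevalE -/E EE /= !(mevalD, mevalZ, mevalM, mevalXU); ring.
Qed.

Theorem mainTheorem2 (Sigma : finType) (hSigma : (0 < #|Sigma|)%N)
    (P : product_rule) :
  BAC Sigma P <-> simple P.
Proof.
split; first by have [a _] := card_gt0P hSigma; apply: simple_of_BAC.
by move=> [a [b [c [abc_rel P_simple]]]]; apply: BAC_of_simple abc_rel P_simple.
Qed.
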